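(* Let $\mathcal G=\mathfrak g_1\oplus\mathfrak g_2$ and $f,g\in C^*_{\mathsf{LTS}}(\mathcal G,\mathcal G)$ homogeneous. If $\|f\|=-1|l$ and $\|g\|=-1|k$, or if $\|f\|=l|-1$ and $\|g\|=k|-1$, then $[f,g]_{\mathsf{LTS}}=0$.
   Context: All vector spaces are over a field of characteristic $0$. Cochains: $C^p(\mathcal G,\mathcal G)=\mathrm{Hom}(\otimes^{2p+1}\mathcal G,\mathcal G)$, arguments $(\mathfrak X_1,\dots,\mathfrak X_p,x)$, $\mathfrak X_i=x_i\otimes y_i$; for $P\in C^p,Q\in C^q$, $(P\circ Q)(\mathfrak X_1,\dots,\mathfrak X_{p+q},x)=\sum_{k=1}^p(-1)^{(k-1)q}\sum_{\sigma\in\mathbb S(k-1,q)}(-1)^\sigma P(\mathfrak X_{\sigma(1)},\dots,\mathfrak X_{\sigma(k-1)},Q(\mathfrak X_{\sigma(k)},\dots,\mathfrak X_{\sigma(k+q-1)},x_{k+q})\otimes y_{k+q},\mathfrak X_{k+q+1},\dots,x)+\sum_{k=1}^p(-1)^{(k-1)q}\sum_{\sigma\in\mathbb S(k-1,q)}(-1)^\sigma P(\mathfrak X_{\sigma(1)},\dots,\mathfrak X_{\sigma(k-1)},x_{k+q}\otimes Q(\mathfrak X_{\sigma(k)},\dots,\mathfrak X_{\sigma(k+q-1)},y_{k+q}),\mathfrak X_{k+q+1},\dots,x)+\sum_{\sigma\in\mathbb S(p,q)}(-1)^\sigma P(\mathfrak X_{\sigma(1)},\dots,\mathfrak X_{\sigma(p)},Q(\mathfrak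 X_{\sigma(p+1)},\dots,\mathfrak X_{\sigma(p+q)},x))$ ($\mathbb S$ = shuffles), $[P,Q]=P\circ Q-(-1)^{pq}Q\circ P$; $C^p_{\mathsf{LTS}}$ is the subspace of $P$ with $P(\dots,x,x,y)=0$ and vanishing cyclic sum in the last three slots, with restricted bracket $[\cdot,\cdot]_{\mathsf{LTS}}$. Bidegree: $\mathfrak g^{a,b}\subset\otimes^{a+b}\mathcal G$ is the sum of all tensor products with exactly $a$ factors $\mathfrak g_1$ and $b$ factors $\mathfrak g_2$; $f\in C^p_{\mathsf{LTS}}$ has bidegree $l|k$ ($l+k=2p$) if $f(\mathfrak g^{l+1,k})\subset\mathfrak g_1$, $f(\mathfrak g^{l,k+1})\subset\mathfrak g_2$, and $f$ vanishes on all other $\mathfrak g^{a,b}$. *)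

From HB Require Import structures.
From mathcomp Require Import all_boot all_order all_algebra all_fingroup.
Set Implicit Arguments. Unset Strict Implicit. Unset Printing Implicit Defensive.
Import Order.TTheory GRing.Theory Num.Theory.
Local Open Scope ring_scope.

(* The vector space  G = g1 (+) g2  is modelled as the product  V1 * V2 ;
   g1 = V1 * 0 and g2 = 0 * V2. *)
Section Cochains.
Variables (K : fieldType) (V1 V2 : lmodType K).
Definition GG := (V1 * V2)%type.

Definition in_g1 (v : GG) : Prop := v.2 = 0.
Definition in_g2 (v : GG) : Prop := v.1 = 0.
Definition in_gc (c : bool) (v : GG) : Prop := if c then in_g1 v else in_g2 v.

(* A p-cochain takes (X_1,...,X_p,x) with X_i = x_i (x) y_i.  The X_i are
   given as a family  X : nat -> GG * GG  (X i = (x_{i+1}, y_{i+1})); only the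
   first p entries are meaningful (see [is_cochain]). *)
Definition cochain := (nat -> GG * GG) -> GG -> GG.

Definition upd (X : nat -> GG * GG) (i : nat) (z : GG * GG) : nat -> GG * GG :=
  fun j => if j == i then z else X j.

(* P is an element of C^p = Hom(G^{(x)(2p+1)}, G): it only depends on
   X 0, ..., X (p-1) and x, and it is linear in each of the 2p+1 slots. *)
Definition is_cochain (p : nat) (P : cochain) : Prop :=
  [/\ (forall X X' x, (forall i, (i < p)%N -> X i = X' i) -> P X x = P X' x),
      (forall X (a : K) u v, P X (a *: u + v) = a *: P X u + P X v),
      (forall X x i (a : K) u v, (i < p)%N ->
          P (upd X i (a *: u + v, (X i).2)) x =
          a *: P (upd X i (u, (X i).2)) x + P (upd X i (v, (X i).2)) x) &
      (forall X x i (a : K) u v, (i < p)%N ->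
          P (upd X i ((X i).1, a *: u + v)) x =
          a *: P (upd X i ((X i).1, u)) x + P (upd X i ((X i).1, v)) x)].

Definition is_lts_cochain (p : nat) (P : cochain) : Prop :=
  is_cochain p P /\
  ((0 < p)%N ->
     (forall X a c, P (upd X p.-1 (a, a)) c = 0) /\
     (forall X a b c, P (upd X p.-1 (a, b)) c + P (upd X p.-1 (b, c)) a
                      + P (upd X p.-1 (c, a)) b = 0)).

Definition n_g1 (p : nat) (cX : nat -> bool * bool) (cx : bool) : nat :=
  (\sum_(i < p) (nat_of_bool (cX i).1 + nat_of_bool (cX i).2) + nat_of_bool cx)%N.

Definition has_bidegree (p : nat) (l k : int) (P : cochain) : Prop :=
  l + k = (2 * p)%:Z /\
  forall (cX : nat -> bool * bool) (cx : bool) (X : nat -> GG * GG) (x : GG),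
    (forall i, (i < p)%N -> in_gc (cX i).1 (X i).1 /\ in_gc (cX i).2 (X i).2) ->
    in_gc cx x ->
    let a := (n_g1 p cX cx)%:Z in
    (a = l + 1 -> in_g1 (P X x)) /\
    (a = l -> in_g2 (P X x)) /\
    (a <> l + 1 -> a <> l -> P X x = 0).

Definition shuffle (i j : nat) (s : 'S_(i + j)) : bool :=
  [forall a : 'I_(i + j), forall b : 'I_(i + j),
     ((a < b)%N && ((b < i)%N || (i <= a)%N)) ==> (s a < s b)%N].

Definition sgn (n : nat) : K := (-1) ^+ n.

Definition permn (n : nat) (s : 'S_n) (i : nat) : nat :=
  if @insub nat (fun k => (k < n)%N) 'I_n i is Some j then nat_of_ord (s j) else i.

(* (P o Q)(X_1,...,X_{p+q},x) for P in C^p, Q in C^q, as in the paper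
   (indices shifted to start from 0; m = k-1). *)
Definition circ (p q : nat) (P Q : cochain) : cochain := fun X x =>
  \sum_(m < p)
     sgn (m * q) *: \sum_(s : 'S_(m + q) | shuffle s)
        sgn (odd_perm s) *:
          P (fun i => if (i < m)%N then X (permn s i)
                      else if i == m then
                        (Q (fun j => X (permn s (m + j))) (X (m + q)%N).1,
                         (X (m + q)%N).2)
                      else X (i + q)%N) x
  + \sum_(m < p)
     sgn (m * q) *: \sum_(s : 'S_(m + q) | shuffle s)
        sgn (odd_perm s) *:
          P (fun i => if (i < m)%N then X (permn s i)
                      else if i == m then
                        ((X (m + q)%N).1,
                         Q (fun j => X (permn s (m + j))) (X (m + q)%N).2)
                      else X (i + q)%N) x
  + \sum_(s : 'S_(p + q) | shuffle s)
        sgn (odd_perm s) *: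
          P (fun i => X (permn s i)) (Q (fun j => X (permn s (p + j))) x).

(* [P,Q] = P o Q - (-1)^{pq} Q o P ; [.,.]_LTS is its restriction. *)
Definition bracket (p q : nat) (P Q : cochain) : cochain := fun X x =>
  circ p q P Q X x - sgn (p * q) *: circ q p Q P X x.

End Cochains.

(* A cochain of bidegree -1|l vanishes unless all its arguments lie in g2, and then
   its value lies in g1; by multilinearity it therefore vanishes as soon as one
   argument, homogeneous or not, lies in g1 (symmetrically for bidegree l|-1, with
   g1 and g2 exchanged).  Every term of f o g feeds a value of g into an argument of
   f, so both compositions in the bracket vanish.  Neither the LTS identities nor
   the characteristic of K play a role. *)

From HB Require Import structures.
From mathcomp Require Import all_boot all_order all_algebra all_fingroup.
From mathcomp Require Import zify.
Import GRing.Theory.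
Local Open Scope ring_scope.

Section Cochains.
Context {K : fieldType} {V1 V2 : lmodType K}.
Local Notation G := (GG V1 V2).
Local Notation cochain := (cochain V1 V2).

Lemma upd_eq (X : nat -> G * G) i z : upd X i z i = z.
Proof. by rewrite /upd eqxx. Qed.

Section CochainAlgebra.
Context {p : nat} {P : cochain}.
Hypothesis P_cochain : is_cochain p P.

Lemma cochain_eq_args X X' x : (forall i, (i < p)%N -> X i = X' i) -> P X x = P X' x.
Proof. by case: P_cochain => ext _ _ _; apply: ext. Qed.

Lemma cochain_upd_id X i x : P (upd X i ((X i).1, (X i).2)) x = P X x.
Proof. by apply: cochain_eq_args => j _; rewrite /upd; case: eqP => // ->; case: (X i). Qed.

Lemma cochain_upd_upd X i z z' x : P (upd (upd X i z) i z') x = P (upd X i z') x.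
Proof. by apply: cochain_eq_args => j _; rewrite /upd; case: eqP. Qed.

Lemma cochainD X u v : P X (u + v) = P X u + P X v.
Proof. by case: P_cochain => _ lin _ _; have := lin X 1 u v; rewrite !scale1r. Qed.

Lemma cochain0 X : P X 0 = 0.
Proof. by apply: (addrI (P X 0)); rewrite -cochainD !addr0. Qed.

Lemma cochain_fstD X i u v w x : (i < p)%N ->
  P (upd X i (u + v, w)) x = P (upd X i (u, w)) x + P (upd X i (v, w)) x.
Proof.
case: P_cochain => _ _ lin _ ip; have := lin (upd X i (0, w)) x i 1 u v ip.
by rewrite upd_eq !cochain_upd_upd !scale1r.
Qed.

Lemma cochain_sndD X i u v w x : (i < p)%N ->
  P (upd X i (w, u + v)) x = P (upd X i (w, u)) x + P (upd X i (w, v)) x.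
Proof.
case: P_cochain => _ _ _ lin ip; have := lin (upd X i (w, 0)) x i 1 u v ip.
by rewrite upd_eq !cochain_upd_upd !scale1r.
Qed.

Lemma cochain_upd_split {X i u1 u2 v1 v2} x : (i < p)%N -> X i = (u1 + u2, v1 + v2) ->
  P X x = P (upd X i (u1, v1)) x + P (upd X i (u1, v2)) x
          + (P (upd X i (u2, v1)) x + P (upd X i (u2, v2)) x).
Proof. by move=> ip Xi; rewrite -(cochain_upd_id X i) Xi cochain_fstD // !cochain_sndD. Qed.

Lemma cochain_fst_eq0 X i x : (i < p)%N -> (X i).1 = 0 -> P X x = 0.
Proof.
move=> ip Xi1; rewrite -(cochain_upd_id X i) Xi1.
by apply/esym/(addrI (P (upd X i (0, (X i).2)) x)); rewrite -cochain_fstD // !addr0.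
Qed.

Lemma cochain_snd_eq0 X i x : (i < p)%N -> (X i).2 = 0 -> P X x = 0.
Proof.
move=> ip Xi2; rewrite -(cochain_upd_id X i) Xi2.
by apply/esym/(addrI (P (upd X i ((X i).1, 0)) x)); rewrite -cochain_sndD // !addr0.
Qed.

End CochainAlgebra.

Definition map_args (phi : G -> G) (X : nat -> G * G) (i : nat) : G * G :=
  (phi (X i).1, phi (X i).2).

Definition precomp (phi : G -> G) (P : cochain) : cochain :=
  fun X x => P (map_args phi X) (phi x).

Lemma map_args_upd phi X i z :
  map_args phi (upd X i z) =1 upd (map_args phi X) i (phi z.1, phi z.2).
Proof. by move=> j; rewrite /map_args /upd; case: eqP. Qed.

Lemma is_cochain_precomp {p P} (phi : {linear G -> G}) :
  is_cochain p P -> is_cochain p (precomp phi P).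
Proof.
move=> P_cochain; have ext := cochain_eq_args P_cochain.
have map_upd X i z x :
    P (map_args phi (upd X i z)) x = P (upd (map_args phi X) i (phi z.1, phi z.2)) x.
  by apply: ext => j _; rewrite map_args_upd.
case: P_cochain => _ linx lin1 lin2; split; rewrite /precomp.
- by move=> X X' x XX'; apply: ext => i ip; rewrite /map_args XX'.
- by move=> X a u v; rewrite linearP linx.
- by move=> X x i a u v ip; rewrite !map_upd /= linearP; apply: lin1.
- by move=> X x i a u v ip; rewrite !map_upd /= linearP; apply: lin2.
Qed.

Definition homogeneous (v : G) : Prop := in_g1 v \/ in_g2 v.

Lemma pair_split (v : G) : v = (v.1, 0) + (0, v.2).
Proof. by case: v => a b; congr (_, _); rewrite /= ?addr0 ?add0r. Qed.

Lemma homogeneous_fst (a : V1) : homogeneous ((a, 0) : G).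
Proof. by left. Qed.

Lemma homogeneous_snd (b : V2) : homogeneous ((0, b) : G).
Proof. by right. Qed.

Section HomogeneousExtension.
Context {p : nat} {P Q : cochain}.
Hypotheses (P_cochain : is_cochain p P) (Q_cochain : is_cochain p Q).
Hypothesis eqPQ_homogeneous : forall X x,
  (forall i, (i < p)%N -> homogeneous (X i).1 /\ homogeneous (X i).2) ->
  homogeneous x -> P X x = Q X x.

Lemma eq_cochain_homogeneous_from {m X} x :
  (forall i, (m <= i < p)%N -> homogeneous (X i).1 /\ homogeneous (X i).2) ->
  homogeneous x -> P X x = Q X x.
Proof.
elim: m X => [|m IHm] X homX homx; first by apply: eqPQ_homogeneous.
have [mp | pm] := ltnP m p; last by apply: IHm => // i /andP[mi ip]; lia.
have eq_upd a b : homogeneous a -> homogeneous b ->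
    P (upd X m (a, b)) x = Q (upd X m (a, b)) x.
  move=> homa homb; apply: IHm => // i /andP[mi ip]; rewrite /upd.
  by case: eqP => [// | /eqP im]; apply: homX; lia.
have Xm : X m = (((X m).1.1, 0) + (0, (X m).1.2), ((X m).2.1, 0) + (0, (X m).2.2)).
  by rewrite -!pair_split; case: (X m).
rewrite (cochain_upd_split P_cochain x mp Xm) (cochain_upd_split Q_cochain x mp Xm).
by rewrite !eq_upd //; do ?[exact: homogeneous_fst | exact: homogeneous_snd].
Qed.

Lemma eq_cochain_homogeneous X x : P X x = Q X x.
Proof.
have homX i : (p <= i < p)%N -> homogeneous (X i).1 /\ homogeneous (X i).2.
  by move=> /andP[pi ip]; lia.
rewrite (pair_split x) (cochainD P_cochain) (cochainD Q_cochain).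
by rewrite (eq_cochain_homogeneous_from _ homX (homogeneous_fst _))
           (eq_cochain_homogeneous_from _ homX (homogeneous_snd _)).
Qed.

End HomogeneousExtension.

Definition proj (c : bool) (v : G) : G := if c then (v.1, 0) else (0, v.2).

Lemma proj_is_linear c : linear (proj c).
Proof. by move=> a u v; case: c; congr (_, _); rewrite /= ?scaler0 ?addr0. Qed.

HB.instance Definition _ c :=
  GRing.isLinear.Build K G G _ (proj c) (proj_is_linear c).

Lemma proj_in_gc c v : in_gc c (proj c v).
Proof. by case: c. Qed.

Lemma proj_eq0 c v : in_gc c v -> proj (~~ c) v = 0.
Proof. by case: c; case: v => a b; rewrite /in_gc /in_g1 /in_g2 /= => ->. Qed.

Lemma proj_id c v : in_gc c v -> proj c v = v.
Proof. by case: c; case: v => a b; rewrite /in_gc /in_g1 /in_g2 /= => ->. Qed.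

Definition deg (v : G) : bool := v.2 == 0.

Lemma in_gc_deg v : homogeneous v -> in_gc (deg v) v.
Proof. by rewrite /deg; case: eqP => // v2 [] // /eqP; rewrite /in_g1 => /eqP. Qed.

Lemma proj_deg c v : homogeneous v -> proj (~~ c) v = if deg v == c then 0 else v.
Proof.
move/in_gc_deg; case: (deg v) c => [] [] hv.
all: by [exact: (proj_eq0 _ _ hv) | exact: (proj_id _ _ hv)].
Qed.

Definition has_deg (c : bool) (p : nat) (cX : nat -> bool * bool) (cx : bool) : bool :=
  (cx == c) || [exists i : 'I_p, ((cX i).1 == c) || ((cX i).2 == c)].

Definition flip_degs (cX : nat -> bool * bool) (i : nat) : bool * bool :=
  (~~ (cX i).1, ~~ (cX i).2).

Lemma n_g1_eq0 p cX cx : (n_g1 p cX cx == 0)%N = ~~ has_deg true p cX cx.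
Proof.
rewrite /n_g1 /has_deg addn_eq0 sum_nat_eq0 negb_or negb_exists eqb_id eqb0 andbC.
by congr (_ && _); apply: eq_forallb => i; case: (cX i) => [[] []].
Qed.

Lemma n_g1_flip p cX cx :
  (n_g1 p cX cx + n_g1 p (flip_degs cX) (~~ cx))%N = (2 * p).+1.
Proof.
rewrite /n_g1 addnACA -big_split /= (eq_bigr (fun=> 2%N)); last first.
  by move=> i _; rewrite /flip_degs; case: (cX i) => [[] []].
by rewrite sum_nat_const card_ord; case: cx => /=; lia.
Qed.

Lemma has_deg_flip p cX cx :
  has_deg false p cX cx = has_deg true p (flip_degs cX) (~~ cx).
Proof.
rewrite /has_deg eqbF_neg eqb_id; congr (_ || _); apply: eq_existsb => i.
by rewrite /flip_degs /= !eqb_id !eqbF_neg.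
Qed.

Lemma n_g1_eq_max p cX cx :
  (n_g1 p cX cx == (2 * p).+1)%N = ~~ has_deg false p cX cx.
Proof.
rewrite has_deg_flip -n_g1_eq0 -(n_g1_flip p cX cx).
by rewrite -{1}[n_g1 _ _ _]addn0 eqn_add2l eq_sym.
Qed.

Lemma n_g1_le p cX cx : (n_g1 p cX cx <= (2 * p).+1)%N.
Proof. by rewrite -(n_g1_flip p cX cx) leq_addr. Qed.

Definition absorbing (c : bool) (p : nat) (P : cochain) : Prop :=
  forall cX cx X x,
    (forall i, (i < p)%N -> in_gc (cX i).1 (X i).1 /\ in_gc (cX i).2 (X i).2) ->
    in_gc cx x ->
    in_gc c (P X x) /\ (has_deg c p cX cx -> P X x = 0).

Lemma absorbing_bidegree_m1_l p l P : has_bidegree p (-1) l P -> absorbing true p P.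
Proof.
case=> _ bideg cX cx X x degX degx.
move: (bideg cX cx X x degX degx) => /= [to_g1 [_ to0]].
have [hd | hd] := boolP (has_deg true p cX cx).
  have n_g1_neq0 : n_g1 p cX cx != 0%N by rewrite n_g1_eq0 hd.
  by rewrite to0; [split | lia | lia].
by split=> // ; apply: to_g1; move: hd; rewrite -n_g1_eq0 => /eqP ->.
Qed.

Lemma absorbing_bidegree_l_m1 p l P : has_bidegree p l (-1) P -> absorbing false p P.
Proof.
case=> hl bideg cX cx X x degX degx.
move: (bideg cX cx X x degX degx) => /= [_ [to_g2 to0]].
have n_g1_max := n_g1_le p cX cx.
have [hd | hd] := boolP (has_deg false p cX cx).
  have n_g1_neq : n_g1 p cX cx != (2 * p).+1 by rewrite n_g1_eq_max hd.
  by rewrite to0; [split | lia | lia].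
split=> //; apply: to_g2.
by move: hd; rewrite -n_g1_eq_max => /eqP ->; lia.
Qed.

Section Absorbing.
Context {c : bool} {p : nat} {P : cochain}.
Hypotheses (P_cochain : is_cochain p P) (P_absorbing : absorbing c p P).

Lemma absorbing_precomp X x : P X x = precomp (proj (~~ c)) P X x.
Proof.
apply: (@eq_cochain_homogeneous p P (precomp (proj (~~ c)) P) P_cochain
         (is_cochain_precomp _ P_cochain)).
(* On homogeneous arguments both sides vanish if one argument lies in g_c, and
   otherwise the projection fixes every argument. *)
move=> {}X {}x homX homx; pose dX i := (deg (X i).1, deg (X i).2).
have degX i : (i < p)%N -> in_gc (dX i).1 (X i).1 /\ in_gc (dX i).2 (X i).2.
  by move=> ip; have [hom1 hom2] := homX i ip; split; apply: in_gc_deg.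
have [_ P0] := P_absorbing dX (deg x) X x degX (in_gc_deg _ homx).
rewrite /precomp /map_args (proj_deg c x homx).
have [hd | ] := boolP (has_deg c p dX (deg x)).
  rewrite P0 //; case/orP: hd => [/eqP -> | /existsP [i /orP [] /eqP /= di]].
  - by rewrite eqxx (cochain0 P_cochain).
  - have [hom1 _] := homX i (ltn_ord i).
    apply/esym/(cochain_fst_eq0 P_cochain _ _ _ (ltn_ord i)).
    by rewrite /= proj_deg // di eqxx.
  - have [_ hom2] := homX i (ltn_ord i).
    apply/esym/(cochain_snd_eq0 P_cochain _ _ _ (ltn_ord i)).
    by rewrite /= proj_deg // di eqxx.
rewrite negb_or negb_exists => /andP [/negbTE -> /forallP not_c].
apply: (cochain_eq_args P_cochain) => i ip; have [hom1 hom2] := homX i ip.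
move: (not_c (Ordinal ip)); rewrite negb_or /= => /andP [/negbTE d1 /negbTE d2].
by rewrite !proj_deg // d1 d2; case: (X i).
Qed.

Lemma absorbing_in_gc X x : in_gc c (P X x).
Proof.
rewrite absorbing_precomp.
have degX i : (i < p)%N -> in_gc (~~ c) (map_args (proj (~~ c)) X i).1 /\
                          in_gc (~~ c) (map_args (proj (~~ c)) X i).2.
  by split; apply: proj_in_gc.
by have [] := P_absorbing (fun=> (~~ c, ~~ c)) (~~ c) _ _ degX (proj_in_gc _ x).
Qed.

Lemma absorbing_x_eq0 X x : in_gc c x -> P X x = 0.
Proof.
by move=> cx; rewrite absorbing_precomp /precomp proj_eq0 // (cochain0 P_cochain).
Qed.

Lemma absorbing_fst_eq0 X x i : (i < p)%N -> in_gc c (X i).1 -> P X x = 0.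
Proof.
move=> ip cXi; rewrite absorbing_precomp.
by apply: (cochain_fst_eq0 P_cochain _ _ _ ip); apply: proj_eq0.
Qed.

Lemma absorbing_snd_eq0 X x i : (i < p)%N -> in_gc c (X i).2 -> P X x = 0.
Proof.
move=> ip cXi; rewrite absorbing_precomp.
by apply: (cochain_snd_eq0 P_cochain _ _ _ ip); apply: proj_eq0.
Qed.

End Absorbing.

Lemma circ_absorbing_eq0 {c p q P Q} :
  is_cochain p P -> absorbing c p P -> is_cochain q Q -> absorbing c q Q ->
  forall X x, circ p q P Q X x = 0.
Proof.
move=> P_cochain P_abs Q_cochain Q_abs X x.
have Q_in_gc := absorbing_in_gc Q_cochain Q_abs.
rewrite /circ !big1 ?addr0 // => [s _ | m _ | m _].
- by rewrite (absorbing_x_eq0 P_cochain P_abs) ?scaler0.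
- rewrite big1 ?scaler0 // => s _.
  rewrite (absorbing_snd_eq0 P_cochain P_abs _ _ m (ltn_ord m)) ?scaler0 //= ltnn eqxx.
  exact: Q_in_gc.
- rewrite big1 ?scaler0 // => s _.
  rewrite (absorbing_fst_eq0 P_cochain P_abs _ _ m (ltn_ord m)) ?scaler0 //= ltnn eqxx.
  exact: Q_in_gc.
Qed.

End Cochains.

Theorem lemma3p3 (K : fieldType) (V1 V2 : lmodType K)
  (charK0 : [pchar K] =i pred0)
  (p q : nat) (f g : cochain V1 V2) (l k : int) :
  is_lts_cochain p f -> is_lts_cochain q g ->
  ((has_bidegree p (-1) l f /\ has_bidegree q (-1) k g) \/
   (has_bidegree p l (-1) f /\ has_bidegree q k (-1) g)) ->
  forall (X : nat -> GG V1 V2 * GG V1 V2) (x : GG V1 V2),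
    bracket p q f g X x = 0.
Proof.
move=> [f_cochain _] [g_cochain _] bidegrees X x.
have [c [f_abs g_abs]] : exists c, absorbing c p f /\ absorbing c q g.
  case: bidegrees => [[bf bg] | [bf bg]]; [exists true | exists false].
    by split; [exact: absorbing_bidegree_m1_l bf | exact: absorbing_bidegree_m1_l bg].
  by split; [exact: absorbing_bidegree_l_m1 bf | exact: absorbing_bidegree_l_m1 bg].
by rewrite /bracket (circ_absorbing_eq0 f_cochain f_abs g_cochain g_abs)
  (circ_absorbing_eq0 g_cochain g_abs f_cochain f_abs) scaler0 subr0.
Qed.
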